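(* Suppose $M$ is a matroid. If $\mathrm{si}(M)$ is rigid, then $M$ is rigid.
   Context: $\mathrm{si}(M)$, the simplification of $M$, is the matroid obtained from $M$ by deleting all loops and restricting to one element from each parallel class. For a matroid $N$ on a finite set $E$ of rank $d$: a valuation of $N$ is a function $\nu:\binom{E}{d}\to\mathbb{R}\cup\{\infty\}$ satisfying (V1) $\nu(B)<\infty$ for some $B$, (V2) for all $d$-sets $B,B'$ and $i\in B\setminus B'$ there is $j\in B'\setminus B$ with $\nu(B)+\nu(B')\ge\nu(B-i+j)+\nu(B'+i-j)$ (where $B-i+j:=(B\cup\{j\})\setminus\{i\}$), and such that $\{B:\nu(B)<\infty\}$ is exactly the set of bases of $N$. A valuation $\nu$ is trivial if there is $\alpha\in\mathbb{R}^E$ with $\nu(B)=\sum_{i\in B}\alpha_i$ for all bases $B$ of $N$. $N$ is rigid if all valuations of $N$ are trivial. *)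

From HB Require Import structures.
From mathcomp Require Import all_boot all_order all_algebra.
From mathcomp Require Import Rstruct.
From Stdlib Require Import Reals.
Set Implicit Arguments. Unset Strict Implicit. Unset Printing Implicit Defensive.
Import Order.TTheory GRing.Theory Num.Theory.
Local Open Scope ring_scope.

Section Matroids.
Variable E : finType.

Definition is_matroid (G : {set E}) (bases : {set {set E}}) : Prop :=
  [/\ forall B, B \in bases -> B \subset G,
      bases != set0 &
      forall B1 B2, B1 \in bases -> B2 \in bases ->
        forall x, x \in B1 :\: B2 ->
          exists2 y, y \in B2 :\: B1 & (B1 :\ x :|: [set y]) \in bases].

Definition indep (bases : {set {set E}}) (I : {set E}) : bool :=
  [exists B in bases, I \subset B].

(* rank of the matroid (all bases have this cardinality) *)
Definition mrank (bases : {set {set E}}) : nat := \max_(B in bases) #|B|.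

Definition is_loop (G : {set E}) (bases : {set {set E}}) (x : E) : bool :=
  (x \in G) && ~~ indep bases [set x].

(* x and y are equal or parallel (for non-loops x, y of the matroid) *)
Definition par_or_eq (bases : {set {set E}}) (x y : E) : bool :=
  (x == y) || ~~ indep bases [set x; y].

Definition restr_bases (bases : {set {set E}}) (S : {set E}) : {set {set E}} :=
  [set I : {set E} | [&& I \subset S, indep bases I &
                       [forall x in S :\: I, ~~ indep bases (x |: I)]]].

(* [S] is the ground set of a simplification of M = (G, bases): S consists
   of non-loops of M and contains exactly one element from each parallel
   class (the parallel classes being the classes of [par_or_eq] on the
   non-loops). si(M) is then the restriction M|S. *)
Definition simplification_set (G : {set E}) (bases : {set {set E}})
  (S : {set E}) : Prop :=
  [/\ S \subset G,
      forall x, x \in S -> ~~ is_loop G bases x,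
      forall x, x \in G -> ~~ is_loop G bases x ->
         exists2 y, y \in S & par_or_eq bases x y &
      forall x y, x \in S -> y \in S -> par_or_eq bases x y -> x = y].

(* Extended reals R ∪ {∞}: [None] is ∞. *)
Definition xadd (a b : option R) : option R :=
  match a, b with Some x, Some y => Some (x + y) | _, _ => None end.
Definition xle (a b : option R) : bool :=
  match a, b with
  | _, None => true
  | None, Some _ => false
  | Some x, Some y => x <= y
  end.

Definition dset (G : {set E}) (d : nat) (B : {set E}) : bool :=
  (B \subset G) && (#|B| == d).

Definition valuation (G : {set E}) (bases : {set {set E}})
  (nu : {set E} -> option R) : Prop :=
  let d := mrank bases in
  [/\ exists2 B, dset G d B & nu B != None,
      (* V2 *) forall B B', dset G d B -> dset G d B' ->
         forall i, i \in B :\: B' ->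
         exists2 j, j \in B' :\: B &
           xle (xadd (nu (B :\ i :|: [set j])) (nu (B' :\ j :|: [set i])))
               (xadd (nu B) (nu B')) &
      forall B, dset G d B -> (nu B != None) = (B \in bases)].

Definition trivial_valuation (bases : {set {set E}}) (nu : {set E} -> option R)
  : Prop :=
  exists alpha : E -> R, forall B, B \in bases -> nu B = Some (\sum_(i in B) alpha i).

Definition rigid (G : {set E}) (bases : {set {set E}}) : Prop :=
  forall nu, valuation G bases nu -> trivial_valuation bases nu.

End Matroids.

(* A valuation nu of M restricts to a valuation of si(M) = M|S, since some
   basis of M lies in S; so by rigidity nu B is the sum of weights alpha over
   every basis B inside S.  If x is a non-loop outside S, with parallel
   element y in S, then applying (V2) to B - x + y and C, and to C - x + y
   and B, for any two bases B, C through x, shows that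
   nu B - nu (B - x + y) does not depend on B.  Calling this constant c_x and
   setting alpha x := alpha y + c_x, induction on |B \ S| gives
   nu B = sum_(i in B) alpha i for every basis B. *)
From Stdlib Require Import Reals.
From mathcomp Require Import all_boot all_order all_algebra.
From mathcomp Require Import Rstruct lra.
Set Implicit Arguments. Unset Strict Implicit. Unset Printing Implicit Defensive.
Import Order.TTheory GRing.Theory Num.Theory.

Section Swap.
Variable E : finType.
Implicit Types (A T : {set E}) (x y : E).

Lemma cards_swap A x y : x \in A -> y \notin A -> #|A :\ x :|: [set y]| = #|A|.
Proof.
move=> xA yA; rewrite setUC cardsU1 in_setD1 (negbTE yA) andbF.
by rewrite [RHS](cardsD1 x) xA.
Qed.

Lemma mem_swap A x y : y \in A :\ x :|: [set y].
Proof. by rewrite !inE eqxx orbT. Qed.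

Lemma setD_swap A T x y : y \in T -> (A :\ x :|: [set y]) :\: T = (A :\: T) :\ x.
Proof.
move=> yT; apply/setP=> z; rewrite !inE.
have [->|_] := eqVneq z y; first by rewrite yT !andbF.
by rewrite orbF; case: (z \in T); case: (z \in A); case: (z == x).
Qed.

Lemma cards_swapD A T x y : x \in A :\: T -> y \in T ->
  (#|(A :\ x :|: [set y]) :\: T| < #|A :\: T|)%N.
Proof. by move=> x_in yT; rewrite setD_swap // [X in (_ < X)%N](cardsD1 x) x_in. Qed.

Lemma swapK A x y : x \in A -> y \notin A -> (A :\ x :|: [set y]) :\ y :|: [set x] = A.
Proof.
move=> xA yA; apply/setP=> z; rewrite !inE.
have [->|_] := eqVneq z x; first by rewrite orbT xA.
have [->|_] := eqVneq z y; first by rewrite (negbTE yA).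
by rewrite !orbF.
Qed.

End Swap.

Section Matroid.
Variables (E : finType) (G : {set E}) (bases : {set {set E}}).
Hypothesis M : is_matroid G bases.
Implicit Types (B I S : {set E}) (x y : E).

Lemma indep_basis_sub B I : B \in bases -> I \subset B -> indep bases I.
Proof. by move=> hB IB; apply/existsP; exists B; rewrite hB. Qed.

Lemma basis_sub B : B \in bases -> B \subset G.
Proof. by case: M => sub _ _; apply: sub. Qed.

Lemma basis_subset_eq B1 B2 : B1 \in bases -> B2 \in bases -> B1 \subset B2 -> B1 = B2.
Proof.
case: M => _ _ exch hB1 hB2 sub12; apply/eqP; rewrite eqEsubset sub12.
apply/subsetP=> z zB2; apply: contraT => zB1.
have [y /setDP[yB1 yB2] _] := exch _ _ hB2 hB1 z (introT setDP (conj zB2 zB1)).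
by rewrite (subsetP sub12 y yB1) in yB2.
Qed.

Lemma bases_card B1 B2 : B1 \in bases -> B2 \in bases -> #|B1| = #|B2|.
Proof.
case: (M) => _ _ exch; have [n] := ubnP #|B1 :\: B2|.
elim: n B1 => // n IHn B1 lt_n hB1 hB2.
have [/eqP|[x x_in]] := set_0Vmem (B1 :\: B2).
  by rewrite setD_eq0 => /(basis_subset_eq hB1 hB2) ->.
have [y y_in hB1'] := exch _ _ hB1 hB2 x x_in.
have /setDP[yB2 yB1] := y_in; have /setDP[xB1 _] := x_in.
rewrite -(cards_swap xB1 yB1); apply: IHn hB1' hB2.
exact: leq_trans (cards_swapD x_in yB2) lt_n.
Qed.

Lemma mrank_card B : B \in bases -> mrank bases = #|B|.
Proof.
move=> hB; apply/eqP; rewrite eqn_leq; apply/andP; split.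
  by apply/bigmax_leqP=> B' hB'; rewrite (bases_card hB' hB).
exact: (@leq_bigmax_cond _ (fun B => B \in bases) (fun B => #|B|)).
Qed.

Lemma indep_card I : indep bases I -> (#|I| <= mrank bases)%N.
Proof. by case/existsP=> B /andP[hB IB]; rewrite (mrank_card hB) subset_leq_card. Qed.

Lemma basis_dset B : B \in bases -> dset G (mrank bases) B.
Proof. by move=> hB; rewrite /dset basis_sub // (mrank_card hB) eqxx. Qed.

Lemma swap_dset B x y : B \in bases -> x \in B -> y \notin B -> y \in G ->
  dset G (mrank bases) (B :\ x :|: [set y]).
Proof.
move=> hB xB yB yG; rewrite /dset cards_swap // (mrank_card hB) eqxx andbT.
by rewrite subUset sub1set yG andbT (subset_trans (subsetDl B [set x])) ?basis_sub.
Qed.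

Lemma restr_bases_basis S B : B \in bases -> B \subset S -> B \in restr_bases bases S.
Proof.
move=> hB BS; rewrite inE BS (indep_basis_sub hB (subxx B)) /=.
apply/forall_inP=> z /setDP[_ zB]; apply/negP=> /indep_card.
by rewrite (mrank_card hB) cardsU1 zB ltnn.
Qed.

Lemma restr_bases_full S B : B \in restr_bases bases S -> #|B| = mrank bases -> B \in bases.
Proof.
rewrite inE => /and3P[_ /existsP[B1 /andP[hB1 BB1]] _].
rewrite (mrank_card hB1) => cardB.
suff -> : B = B1 by [].
by apply/eqP; rewrite eqEcard BB1 cardB leqnn.
Qed.

Lemma mrank_restr S B0 : B0 \in bases -> B0 \subset S ->
  mrank (restr_bases bases S) = mrank bases.
Proof.
move=> hB0 B0S; apply/eqP; rewrite eqn_leq; apply/andP; split.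
  by apply/bigmax_leqP=> I; rewrite inE => /and3P[_ /indep_card].
rewrite (mrank_card hB0).
exact: (@leq_bigmax_cond _ (fun B => B \in restr_bases bases S) (fun B => #|B|)
  _ (restr_bases_basis hB0 B0S)).
Qed.

Lemma valuation_restr S B0 nu : S \subset G -> B0 \in bases -> B0 \subset S ->
  valuation G bases nu -> valuation S (restr_bases bases S) nu.
Proof.
move=> SG hB0 B0S [_ V2 supp]; rewrite /valuation (mrank_restr hB0 B0S).
have dsetG B : dset S (mrank bases) B -> dset G (mrank bases) B.
  by case/andP=> BS cardB; rewrite /dset (subset_trans BS SG).
split.
- exists B0; first by rewrite /dset B0S (mrank_card hB0) eqxx.
  by rewrite (supp _ (basis_dset hB0)).
- by move=> B B' /dsetG dB /dsetG dB'; apply: V2.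
- move=> B dB; rewrite (supp _ (dsetG _ dB)); case/andP: dB => BS /eqP cardB.
  apply/idP/idP=> [hB | /restr_bases_full]; last exact.
  exact: restr_bases_basis.
Qed.

End Matroid.

Local Open Scope ring_scope.

(* Junk value 0 at infinity; only used on bases, where [nu] is finite. *)
Definition val_real (E : finType) (nu : {set E} -> option R) (B : {set E}) : R :=
  odflt 0 (nu B).

Lemma xle_xadd_Some (a b : option R) (u v : R) :
  xle (xadd a b) (xadd (Some u) (Some v)) ->
  [/\ a != None, b != None & odflt 0 a + odflt 0 b <= u + v].
Proof. by case: a; case: b. Qed.

Section Valuation.
Variables (E : finType) (G : {set E}) (bases : {set {set E}}).
Variable nu : {set E} -> option R.
Hypotheses (M : is_matroid G bases) (nu_val : valuation G bases nu).
Implicit Types (A B C : {set E}) (x y : E).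
Local Notation w := (val_real nu).

Lemma valuation_basis B : B \in bases -> nu B = Some (w B).
Proof.
case: nu_val => _ _ supp hB; move: (supp B (basis_dset M hB)).
by rewrite hB /val_real; case: (nu B).
Qed.

(* Finiteness of the right-hand side of (V2) forces both exchanged sets to be
   bases: a symmetric exchange property, stronger than the axiom of
   [is_matroid], which spares us the theory of matroid closure below. *)
Lemma valuation_exchange B1 B2 i : B1 \in bases -> B2 \in bases -> i \in B1 :\: B2 ->
  exists2 j, j \in B2 :\: B1 &
    [/\ B1 :\ i :|: [set j] \in bases, B2 :\ j :|: [set i] \in bases &
        w (B1 :\ i :|: [set j]) + w (B2 :\ j :|: [set i]) <= w B1 + w B2].
Proof.
move=> hB1 hB2 i_in; case: (nu_val) => _ V2 supp.
have [j j_in] := V2 _ _ (basis_dset M hB1) (basis_dset M hB2) _ i_in.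
rewrite (valuation_basis hB1) (valuation_basis hB2) => /xle_xadd_Some[fin1 fin2 le].
exists j => //; have /setDP[iB1 iB2] := i_in; have /setDP[jB2 jB1] := j_in.
rewrite -(supp _ (swap_dset M hB1 iB1 jB1 (subsetP (basis_sub M hB2) j jB2))).
rewrite -(supp _ (swap_dset M hB2 jB2 iB2 (subsetP (basis_sub M hB1) i iB1))).
by split.
Qed.

Lemma parallel_exchange A B x y : A \in bases -> B \in bases ->
  y \in A -> y \notin B -> x \in B -> ~~ indep bases [set x; y] ->
  [/\ A :\ y :|: [set x] \in bases, B :\ x :|: [set y] \in bases &
      w (A :\ y :|: [set x]) + w (B :\ x :|: [set y]) <= w A + w B].
Proof.
move=> hA hB yA yB xB xy_dep.
have yAB : y \in A :\: B by rewrite inE yA yB.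
have [j /setDP[jB _] [hA' hB' le]] := valuation_exchange hA hB yAB.
suff ejx : j = x by rewrite -ejx.
apply/eqP; apply: contraNT xy_dep => njx; apply: (indep_basis_sub hB').
by rewrite subUset !sub1set mem_swap !inE eq_sym njx xB.
Qed.

Lemma parallel_swap B x y : B \in bases -> x \in B ->
  indep bases [set y] -> ~~ indep bases [set x; y] ->
  y \notin B /\ B :\ x :|: [set y] \in bases.
Proof.
move=> hB xB /existsP[A /andP[hA]]; rewrite sub1set => yA xy_dep.
have yB : y \notin B.
  apply: contraNN xy_dep => yB.
  by apply: (indep_basis_sub hB); rewrite subUset !sub1set xB.
by have [] := parallel_exchange hA hB yA yB xB xy_dep.
Qed.

Lemma parallel_swap_diff B C x y : B \in bases -> C \in bases -> x \in B -> x \in C ->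
  indep bases [set y] -> ~~ indep bases [set x; y] ->
  w B - w (B :\ x :|: [set y]) = w C - w (C :\ x :|: [set y]).
Proof.
move=> hB hC xB xC y_indep xy_dep.
have [yB hB'] := parallel_swap hB xB y_indep xy_dep.
have [yC hC'] := parallel_swap hC xC y_indep xy_dep.
have [_ _] := parallel_exchange hB' hC (mem_swap B x y) yC xC xy_dep.
have [_ _] := parallel_exchange hC' hB (mem_swap C x y) yB xB xy_dep.
rewrite !swapK // => le1 le2; lra.
Qed.

Section Simplification.
Variable S : {set E}.
Hypothesis simp : simplification_set G bases S.

Lemma indep_simplification y : y \in S -> indep bases [set y].
Proof.
case: simp => SG nonloop _ _ yS.
by have := nonloop y yS; rewrite /is_loop (subsetP SG y yS) negbK.
Qed.

Definition parallel_rep (x : E) : E := odflt x [pick y in S | ~~ indep bases [set x; y]].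

Lemma parallel_repP B x : B \in bases -> x \in B -> x \notin S ->
  parallel_rep x \in S /\ ~~ indep bases [set x; parallel_rep x].
Proof.
case: simp => _ _ has_rep _ hB xB xS.
have xG : x \in G := subsetP (basis_sub M hB) x xB.
have nonloop : ~~ is_loop G bases x.
  by rewrite /is_loop xG (indep_basis_sub hB) // sub1set.
have [y yS] := has_rep x xG nonloop.
have [exy|nxy] := eqVneq x y; first by rewrite exy yS in xS.
rewrite /par_or_eq (negbTE nxy) /= => xy_dep; rewrite /parallel_rep.
case: pickP => [z /andP[zS xz_dep] | none] //.
by have := none y; rewrite yS xy_dep.
Qed.

Lemma swap_rep_basis B x : B \in bases -> x \in B -> x \notin S ->
  parallel_rep x \notin B /\ B :\ x :|: [set parallel_rep x] \in bases.
Proof.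
move=> hB xB xS; have [repS dep] := parallel_repP hB xB xS.
exact: parallel_swap hB xB (indep_simplification repS) dep.
Qed.

Lemma simplification_basis_ind (P : {set E} -> Prop) :
  (forall B, B \in bases -> B \subset S -> P B) ->
  (forall B x, B \in bases -> x \in B -> x \notin S ->
     P (B :\ x :|: [set parallel_rep x]) -> P B) ->
  forall B, B \in bases -> P B.
Proof.
move=> PS Pswap B; have [n] := ubnP #|B :\: S|.
elim: n B => // n IHn B lt_n hB.
have [/eqP|[x x_in]] := set_0Vmem (B :\: S); first by rewrite setD_eq0; apply: PS.
have /setDP[xB xS] := x_in; have [repS _] := parallel_repP hB xB xS.
have [_ hB'] := swap_rep_basis hB xB xS.
apply: (Pswap B x hB xB xS (IHn _ _ hB')).
exact: leq_trans (cards_swapD x_in repS) lt_n.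
Qed.

Lemma exists_basis_subset : exists2 B, B \in bases & B \subset S.
Proof.
case: M => _ /set0Pn[B hB] _.
apply: (simplification_basis_ind _ _ hB) => [B' hB' B'S | _ _ _ _ _ //].
by exists B'.
Qed.

Definition basis_through (x : E) : {set E} := odflt set0 [pick B in bases | x \in B].

Lemma basis_throughP B x : B \in bases -> x \in B ->
  basis_through x \in bases /\ x \in basis_through x.
Proof.
move=> hB xB; rewrite /basis_through; case: pickP => [C /andP[] // | none].
by have := none B; rewrite hB xB.
Qed.

Definition extend_weight (alpha : E -> R) (x : E) : R :=
  if x \in S then alpha x
  else alpha (parallel_rep x) + w (basis_through x)
       - w (basis_through x :\ x :|: [set parallel_rep x]).

Lemma valuation_swap_rep alpha B x : B \in bases -> x \in B -> x \notin S ->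
  w B = w (B :\ x :|: [set parallel_rep x])
        + extend_weight alpha x - alpha (parallel_rep x).
Proof.
move=> hB xB xS; have [repS dep] := parallel_repP hB xB xS.
have [hC xC] := basis_throughP hB xB.
have := parallel_swap_diff hB hC xB xC (indep_simplification repS) dep.
rewrite /extend_weight (negbTE xS); lra.
Qed.

Lemma trivial_valuation_extend alpha :
  (forall B, B \in bases -> B \subset S -> nu B = Some (\sum_(i in B) alpha i)) ->
  trivial_valuation bases nu.
Proof.
move=> nuS; exists (extend_weight alpha); apply: simplification_basis_ind.
  move=> B hB BS; rewrite nuS //; congr Some; apply: eq_bigr => i iB.
  by rewrite /extend_weight (subsetP BS i iB).
move=> B x hB xB xS; have [repS _] := parallel_repP hB xB xS.
have [repB hB'] := swap_rep_basis hB xB xS.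
rewrite (valuation_basis hB) (valuation_basis hB') => -[IH]; congr Some.
rewrite (valuation_swap_rep alpha hB xB xS) IH (big_setD1 x xB) /=.
rewrite setUC big_setU1 /=; last by rewrite !inE (negbTE repB) andbF.
rewrite {1}/extend_weight repS; lra.
Qed.

End Simplification.
End Valuation.

Theorem mainTheorem20 (E : finType) (G : {set E}) (bases : {set {set E}})
  (S : {set E}) :
  is_matroid G bases ->
  simplification_set G bases S ->
  rigid S (restr_bases bases S) ->
  rigid G bases.
Proof.
move=> M simp rigS nu nu_val.
have [B0 hB0 B0S] := exists_basis_subset M nu_val simp.
have [SG _ _ _] := simp.
have [alpha nuS] := rigS nu (valuation_restr M SG hB0 B0S nu_val).
apply: (trivial_valuation_extend M nu_val simp (alpha := alpha)) => B hB BS.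
exact: nuS (restr_bases_basis M hB BS).
Qed.
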